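(* Let $\mu=(d_1,d_2,\dots)$ be a sequence of positive integers and let $\{R_i\mid i\in I\}$ be a collection of $*$-regular subrings of $\mathcal{M}^{alg}_\mu$. Then $\bigcap_{i\in I}R_i$ is also a $*$-regular subring of $\mathcal{M}^{alg}_\mu$.
   Context: A ring is von Neumann regular if every principal right ideal is generated by an idempotent; a $*$-regular ring is a regular ring with involution in which $a^*a=0$ implies $a=0$; a $*$-regular subring is a subring closed under the involution which is itself $*$-regular. Fix a nonprincipal ultrafilter $\omega$ on $\mathbb{N}$. Let $\mathcal{J}$ be the ideal of $\prod_n\mathrm{Mat}_{d_n\times d_n}(\mathbb{C})$ consisting of sequences $(a_n)$ with $\lim_\omega\mathrm{rank}(a_n)/d_n=0$, and $\mathcal{M}^{alg}_\mu=\prod_n\mathrm{Mat}_{d_n\times d_n}(\mathbb{C})/\mathcal{J}$ with involution induced by coordinatewise conjugate transpose. *)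

From HB Require Import structures.
From mathcomp Require Import all_boot all_order all_algebra.
From mathcomp Require Import boolp classical_sets filter reals Rstruct.
From mathcomp Require Import complex.
Set Implicit Arguments. Unset Strict Implicit. Unset Printing Implicit Defensive.
Import Order.TTheory GRing.Theory Num.Theory.
Local Open Scope ring_scope.
Local Open Scope classical_set_scope.

Definition Rr : rcfType := Rdefinitions.R.
Notation CC := (complex Rr).

Definition nonprincipal_ultrafilter (om : set_system nat) : Prop :=
  UltraFilter om /\ (\oo `<=` om).

Section MatSeq.
Variable d : nat -> nat.

Definition MatSeq := forall n : nat, 'M[CC]_(d n).

Definition ms_zero : MatSeq := fun n => 0.
Definition ms_one : MatSeq := fun n => 1%:M.
Definition ms_add (a b : MatSeq) : MatSeq := fun n => a n + b n.
Definition ms_opp (a : MatSeq) : MatSeq := fun n => - a n.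
Definition ms_mul (a b : MatSeq) : MatSeq := fun n => a n *m b n.
Definition ms_adj (a : MatSeq) : MatSeq := fun n => (map_mx Num.conj (a n))^T.

Definition ulim0 (om : set_system nat) (x : nat -> Rr) : Prop :=
  forall eps : Rr, 0 < eps -> om [set n | `|x n| < eps].

Definition Jideal (om : set_system nat) (a : MatSeq) : Prop :=
  ulim0 om (fun n => (\rank (a n))%:R / (d n)%:R).

(* equality in M^alg_mu = prod / J *)
Definition meq (om : set_system nat) (a b : MatSeq) : Prop :=
  Jideal om (ms_add a (ms_opp b)).

(* A subset of M^alg_mu is represented by its preimage in the product,
   i.e. a J-saturated predicate S on MatSeq (S a means "the class of a is in S"). *)
Definition saturated (om : set_system nat) (S : MatSeq -> Prop) : Prop :=
  forall a b, meq om a b -> S a -> S b.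

Definition star_subring (om : set_system nat) (S : MatSeq -> Prop) : Prop :=
  saturated om S /\ S ms_one /\ S ms_zero /\
      (forall a b, S a -> S b -> S (ms_add a b)) /\
      (forall a, S a -> S (ms_opp a)) /\
      (forall a b, S a -> S b -> S (ms_mul a b)) /\
      (forall a, S a -> S (ms_adj a)).

(* von Neumann regular: every principal right ideal aS is generated by an
   idempotent e of S, i.e. aS = eS, i.e. a in eS and e in aS. *)
Definition regular_sub (om : set_system nat) (S : MatSeq -> Prop) : Prop :=
  forall a, S a -> exists e, [/\ S e, meq om (ms_mul e e) e,
     (exists y, S y /\ meq om a (ms_mul e y)) &
     (exists z, S z /\ meq om e (ms_mul a z))].

Definition star_regular_subring (om : set_system nat) (S : MatSeq -> Prop) : Prop :=
  [/\ star_subring om S, regular_sub om S &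
      (forall a, S a -> meq om (ms_mul (ms_adj a) a) ms_zero -> meq om a ms_zero)].

End MatSeq.

(* In a *-regular ring every element a has a Moore-Penrose inverse: if z and w
   are hermitian inner inverses of a a* and a* a, then x := a* z a w a*
   satisfies a x a = a, x a x = x and (a x)* = a x, (x a)* = x a. These four
   equations determine x uniquely in any ring with involution. The ambient
   ring M^alg_mu is itself *-regular (rank (A* A) = rank A), so the
   Moore-Penrose inverse of an a in every R_i, computed in any R_i, is the one
   of M^alg_mu; hence it lies in the intersection and a x is the idempotent
   generating a R. *)

From mathcomp Require Import all_boot all_order all_algebra.
From mathcomp Require Import boolp classical_sets filter Rstruct complex.
From Stdlib Require Setoid.
Set Implicit Arguments. Unset Strict Implicit. Unset Printing Implicit Defensive.
Import Order.TTheory GRing.Theory Num.Theory.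
Local Open Scope ring_scope.

Local Notation "a ⊕ b" := (ms_add a b) (at level 50, left associativity).
Local Notation "⊖ a" := (ms_opp a) (at level 35).
Local Notation "a ⊗ b" := (ms_mul a b) (at level 40, left associativity).
Local Notation "a ⋆" := (ms_adj a) (at level 2, format "a ⋆").

Lemma mxrank_trmxC m n (A : 'M[CC]_(m, n)) : \rank (A^t*)%sesqui = \rank A.
Proof. by rewrite mxrank_map mxrank_tr. Qed.

Lemma mulmx_trmxC_eq0 m n (K : 'M[CC]_(m, n)) : K *m (K^t*)%sesqui = 0 -> K = 0.
Proof.
move=> KK0; apply/matrixP => i j; rewrite mxE.
have := congr1 (fun M : 'M_m => M i i) KK0; rewrite !mxE => sum0.
have {}sum0 : \sum_k K i k * (K i k)^* = 0.
  by rewrite -[RHS]sum0; apply: eq_bigr => k _; rewrite !mxE.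
apply/eqP; rewrite -mul_conjC_eq0; apply/eqP.
exact: psumr_eq0P (fun k _ => mul_conjC_ge0 (K i k)) sum0 j isT.
Qed.

Lemma mxrank_trmxC_mul n (A : 'M[CC]_n) : \rank ((A^t*)%sesqui *m A) = \rank A.
Proof.
rewrite -[RHS]mxrank_trmxC; apply/mxrank_injP.
set B := (_ :&: _)%MS.
have BA0 : B *m A = 0 by apply/sub_kermxP; exact: capmxSr.
have /submxP [D BD] : (B <= (A^t*)%sesqui)%MS by exact: capmxSl.
apply/eqP/mulmx_trmxC_eq0.
by rewrite {2}BD trmx_mul map_mxM trmxCK mulmxA BA0 mul0mx.
Qed.

Section PointwiseAlgebra.
Variable d : nat -> nat.
Implicit Types a b c : MatSeq d.

Local Ltac pointwise := apply: functional_extensionality_dep => n.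

Lemma ms_adjE a n : a⋆ n = (a n ^t*)%sesqui.
Proof. by rewrite /ms_adj map_trmx. Qed.

Lemma ms_mulA a b c : a ⊗ (b ⊗ c) = a ⊗ b ⊗ c.
Proof. by pointwise; rewrite /ms_mul mulmxA. Qed.

Lemma ms_mulDl a b c : (a ⊕ b) ⊗ c = a ⊗ c ⊕ b ⊗ c.
Proof. by pointwise; rewrite /ms_mul /ms_add mulmxDl. Qed.

Lemma ms_mulDr a b c : c ⊗ (a ⊕ b) = c ⊗ a ⊕ c ⊗ b.
Proof. by pointwise; rewrite /ms_mul /ms_add mulmxDr. Qed.

Lemma ms_mulNl a c : (⊖ a) ⊗ c = ⊖ (a ⊗ c).
Proof. by pointwise; rewrite /ms_mul /ms_opp mulNmx. Qed.

Lemma ms_mulNr a c : c ⊗ (⊖ a) = ⊖ (c ⊗ a).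
Proof. by pointwise; rewrite /ms_mul /ms_opp mulmxN. Qed.

Lemma ms_mul0r a : a ⊗ ms_zero d = ms_zero d.
Proof. by pointwise; rewrite /ms_mul /ms_zero mulmx0. Qed.

Lemma ms_addN a : a ⊕ ⊖ a = ms_zero d.
Proof. by pointwise; rewrite /ms_add /ms_opp /ms_zero addrN. Qed.

Lemma ms_addr0 a : a ⊕ ms_zero d = a.
Proof. by pointwise; rewrite /ms_add /ms_zero addr0. Qed.

Lemma ms_opp0 : ⊖ ms_zero d = ms_zero d.
Proof. by pointwise; rewrite /ms_opp /ms_zero oppr0. Qed.

Lemma ms_adjK a : a⋆⋆ = a.
Proof. by pointwise; rewrite !ms_adjE trmxCK. Qed.

Lemma ms_adjM a b : (a ⊗ b)⋆ = b⋆ ⊗ a⋆.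
Proof. by pointwise; rewrite /ms_mul /ms_adj map_mxM trmx_mul. Qed.

Lemma ms_adjD a b : (a ⊕ b)⋆ = a⋆ ⊕ b⋆.
Proof. by pointwise; rewrite /ms_add /ms_adj map_mxD linearD. Qed.

Lemma ms_adjN a : (⊖ a)⋆ = ⊖ a⋆.
Proof. by pointwise; rewrite /ms_opp /ms_adj map_mxN linearN. Qed.

End PointwiseAlgebra.

Section Quotient.
Context (d : nat -> nat) (om : set_system nat) {om_filter : Filter om}.
Implicit Types a b c x y : MatSeq d.

Local Notation "a ≡ b" := (meq om a b) (at level 70).

Lemma Jideal_rank_le a c :
  (forall n, \rank (c n) <= \rank (a n))%N -> Jideal om a -> Jideal om c.
Proof.
move=> le_ca Ja eps eps_gt0; apply: filterS (Ja eps eps_gt0) => n /=.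
have d_inv_ge0 : 0 <= ((d n)%:R : Rr)^-1 by rewrite invr_ge0 ler0n.
rewrite !ger0_norm ?divr_ge0 ?ler0n //.
by apply: le_lt_trans; apply: ler_wpM2r; rewrite ?ler_nat.
Qed.

Lemma Jideal_rank_leD a b c :
  (forall n, \rank (c n) <= \rank (a n) + \rank (b n))%N ->
  Jideal om a -> Jideal om b -> Jideal om c.
Proof.
move=> le_cab Ja Jb eps eps_gt0.
have eps2_gt0 : 0 < eps / 2 by rewrite divr_gt0.
apply: filterS (filterI (Ja _ eps2_gt0) (Jb _ eps2_gt0)) => n /= [].
have d_inv_ge0 : 0 <= ((d n)%:R : Rr)^-1 by rewrite invr_ge0 ler0n.
rewrite !ger0_norm ?divr_ge0 ?ler0n // => ra_lt rb_lt.
rewrite (splitr eps); apply: le_lt_trans (ltrD ra_lt rb_lt).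
by rewrite -mulrDl -natrD; apply: ler_wpM2r; rewrite ?ler_nat.
Qed.

Lemma Jideal0 : Jideal om (ms_zero d).
Proof.
move=> eps eps_gt0; apply: filterS filterT => n _ /=.
by rewrite /ms_zero mxrank0 mul0r normr0.
Qed.

Lemma meq_refl a : a ≡ a.
Proof.
by apply: Jideal_rank_le Jideal0 => n; rewrite /ms_add /ms_opp addrN mxrank0.
Qed.

Lemma meq_sym a b : a ≡ b -> b ≡ a.
Proof.
by apply: Jideal_rank_le => n; rewrite /ms_add /ms_opp -opprB mxrank_opp.
Qed.

Lemma meq_trans a b c : a ≡ b -> b ≡ c -> a ≡ c.
Proof.
apply: Jideal_rank_leD => n; rewrite /ms_add /ms_opp.
have -> : a n - c n = (a n - b n) + (b n - c n) by rewrite addrA subrK.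
exact: mxrank_add.
Qed.

Add Parametric Relation : (MatSeq d) (meq om)
  reflexivity proved by meq_refl
  symmetry proved by meq_sym
  transitivity proved by meq_trans as meq_rel.

Add Parametric Morphism : (@ms_add d) with signature
  (Morphisms.respectful (meq om) (Morphisms.respectful (meq om) (meq om)))
  as ms_add_meq.
Proof.
move=> a b ab c e ce; apply: Jideal_rank_leD ab ce => n.
by rewrite /ms_add /ms_opp opprD addrACA mxrank_add.
Qed.

Add Parametric Morphism : (@ms_opp d) with signature
  (Morphisms.respectful (meq om) (meq om)) as ms_opp_meq.
Proof.
move=> a b; apply: Jideal_rank_le => n.
by rewrite /ms_add /ms_opp -opprD mxrank_opp.
Qed.

Add Parametric Morphism : (@ms_mul d) with signature
  (Morphisms.respectful (meq om) (Morphisms.respectful (meq om) (meq om)))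
  as ms_mul_meq.
Proof.
move=> a b ab c e ce; apply: Jideal_rank_leD ab ce => n.
rewrite /ms_add /ms_opp /ms_mul.
have -> : a n *m c n - b n *m e n = (a n - b n) *m c n + b n *m (c n - e n).
  by rewrite mulmxBl mulmxBr addrA subrK.
apply: leq_trans (mxrank_add _ _) _.
by apply: leq_add; [exact: mxrankM_maxl | exact: mxrankM_maxr].
Qed.

Add Parametric Morphism : (@ms_adj d) with signature
  (Morphisms.respectful (meq om) (meq om)) as ms_adj_meq.
Proof.
move=> a b; apply: Jideal_rank_le => n.
by rewrite -ms_adjN -ms_adjD ms_adjE mxrank_trmxC.
Qed.

Lemma meq_subr0 a b : a ⊕ ⊖ b ≡ ms_zero d -> a ≡ b.
Proof.
by apply: Jideal_rank_le => n; rewrite /ms_add /ms_opp /ms_zero oppr0 addr0.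
Qed.

Lemma meq_adj_mul0 a : a⋆ ⊗ a ≡ ms_zero d -> a ≡ ms_zero d.
Proof.
apply: Jideal_rank_le => n.
by rewrite /ms_add /ms_opp /ms_zero /ms_mul !oppr0 !addr0 ms_adjE mxrank_trmxC_mul.
Qed.

Lemma regular_of_inner_inverse (S : MatSeq d -> Prop) :
  (forall a b, S a -> S b -> S (a ⊗ b)) ->
  (forall a, S a -> exists2 x, S x & a ⊗ x ⊗ a ≡ a) ->
  regular_sub om S.
Proof.
move=> S_mul S_inner a Sa; have [x Sx axa] := S_inner a Sa.
exists (a ⊗ x); split.
- exact: S_mul.
- by rewrite (ms_mulA (a ⊗ x) a x) axa; reflexivity.
- by exists a; split=> //; rewrite axa; reflexivity.
- by exists x; split=> //; reflexivity.
Qed.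

Lemma star_regular_full : star_regular_subring om (fun _ : MatSeq d => True).
Proof.
split=> [|| a _]; [by do !split | | exact: meq_adj_mul0].
apply: regular_of_inner_inverse => // a _.
exists (fun n => pinvmx (a n)) => //.
suff -> : a ⊗ (fun n => pinvmx (a n)) ⊗ a = a by reflexivity.
by apply: functional_extensionality_dep => n; rewrite /ms_mul mulmxKpV.
Qed.

Definition is_MP_inverse a x : Prop :=
  [/\ a ⊗ x ⊗ a ≡ a, x ⊗ a ⊗ x ≡ x, (a ⊗ x)⋆ ≡ a ⊗ x & (x ⊗ a)⋆ ≡ x ⊗ a].

Lemma MP_inverse_unique a x y : is_MP_inverse a x -> is_MP_inverse a y -> x ≡ y.
Proof.
case=> axa xax ax_adj xa_adj [aya yay ay_adj ya_adj].
have x_xay : x ≡ x ⊗ a ⊗ y.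
  transitivity (x ⊗ x⋆ ⊗ a⋆).
    by rewrite -{1}xax -ms_mulA -ax_adj ms_adjM ms_mulA; reflexivity.
  transitivity (x ⊗ x⋆ ⊗ (a ⊗ y ⊗ a)⋆); first by rewrite aya; reflexivity.
  transitivity (x ⊗ (a ⊗ x)⋆ ⊗ (a ⊗ y)⋆).
    by rewrite !ms_adjM !ms_mulA; reflexivity.
  by rewrite ax_adj ay_adj !ms_mulA xax; reflexivity.
have y_xay : y ≡ x ⊗ a ⊗ y.
  transitivity ((y ⊗ (a ⊗ x ⊗ a))⋆ ⊗ y).
    by rewrite axa ya_adj yay; reflexivity.
  transitivity ((x ⊗ a)⋆ ⊗ (y ⊗ a)⋆ ⊗ y).
    by rewrite !ms_adjM !ms_mulA; reflexivity.
  by rewrite xa_adj ya_adj -(ms_mulA (x ⊗ a)) yay; reflexivity.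
by rewrite x_xay -y_xay; reflexivity.
Qed.

Section StarRegularSubring.
Variable S : MatSeq d -> Prop.
Hypothesis S_srs : star_regular_subring om S.

Lemma srs_meq a b : a ≡ b -> S a -> S b.
Proof. by case: S_srs => [[S_sat _] _ _]; apply: S_sat. Qed.

Lemma srs_add a b : S a -> S b -> S (a ⊕ b).
Proof. by case: S_srs => [[_ [_ [_ [S_add _]]]] _ _]; apply: S_add. Qed.

Lemma srs_opp a : S a -> S (⊖ a).
Proof. by case: S_srs => [[_ [_ [_ [_ [S_opp _]]]]] _ _]; apply: S_opp. Qed.

Lemma srs_mul a b : S a -> S b -> S (a ⊗ b).
Proof. by case: S_srs => [[_ [_ [_ [_ [_ [S_mul _]]]]]] _ _]; apply: S_mul. Qed.

Lemma srs_adj a : S a -> S a⋆.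
Proof. by case: S_srs => [[_ [_ [_ [_ [_ [_ S_adj]]]]]] _ _]; apply: S_adj. Qed.

Lemma srs_adj_mul0 a : S a -> a⋆ ⊗ a ≡ ms_zero d -> a ≡ ms_zero d.
Proof. by case: S_srs => _ _ S_cancel; apply: S_cancel. Qed.

Lemma srs_inner_inverse b : S b -> exists2 z, S z & b ⊗ z ⊗ b ≡ b.
Proof.
case: S_srs => _ S_reg _ Sb.
have [e [_ ee_e [y [_ b_ey]] [z [Sz e_bz]]]] := S_reg b Sb.
exists z => //.
by rewrite -e_bz b_ey ms_mulA ee_e; reflexivity.
Qed.

Lemma srs_hermitian_inner_inverse b : S b -> b⋆ = b ->
  exists w, [/\ S w, w⋆ = w & b ⊗ w ⊗ b ≡ b].
Proof.
move=> Sb b_herm; have [z Sz bzb] := srs_inner_inverse Sb.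
exists (z ⊗ b ⊗ z⋆); split.
- by apply: srs_mul; [apply: srs_mul | apply: srs_adj].
- by rewrite !ms_adjM ms_adjK b_herm ms_mulA.
have bzb_adj : b ⊗ z⋆ ⊗ b = (b ⊗ z ⊗ b)⋆ by rewrite !ms_adjM b_herm ms_mulA.
have -> : b ⊗ (z ⊗ b ⊗ z⋆) ⊗ b = b ⊗ z ⊗ b ⊗ (z⋆ ⊗ b) by rewrite !ms_mulA.
by rewrite bzb ms_mulA bzb_adj bzb b_herm; reflexivity.
Qed.

Lemma srs_factor_adj_mul a w : S a -> S w -> w⋆ = w ->
  a⋆ ⊗ a ⊗ w ⊗ (a⋆ ⊗ a) ≡ a⋆ ⊗ a -> a ≡ a ⊗ w ⊗ (a⋆ ⊗ a).
Proof.
(* u := a - a w (a* a) satisfies a* u ≡ 0, hence u* u ≡ 0 and u ≡ 0. *)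
move=> Sa Sw w_herm cwc; apply: meq_subr0.
set c := a⋆ ⊗ a in cwc *; set u := a ⊕ ⊖ (a ⊗ w ⊗ c).
have c_herm : c⋆ = c by rewrite ms_adjM ms_adjK.
have Su : S u.
  exact: srs_add Sa (srs_opp (srs_mul (srs_mul Sa Sw) (srs_mul (srs_adj Sa) Sa))).
have adj_u : a⋆ ⊗ u ≡ ms_zero d.
  rewrite /u ms_mulDr ms_mulNr !ms_mulA -/c -(ms_mulA (c ⊗ w)) -/c cwc ms_addN.
  reflexivity.
apply: srs_adj_mul0 Su _.
have -> : u⋆ ⊗ u = a⋆ ⊗ u ⊕ ⊖ (c ⊗ w ⊗ (a⋆ ⊗ u)).
  by rewrite {1}/u ms_adjD ms_adjN ms_adjM c_herm ms_adjM w_herm ms_mulDl ms_mulNl !ms_mulA.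
by rewrite adj_u ms_mul0r ms_opp0 ms_addr0; reflexivity.
Qed.

Lemma srs_MP_inverse a : S a -> exists2 x, S x & is_MP_inverse a x.
Proof.
move=> Sa; have Sa' := srs_adj Sa.
have aa'_herm : (a ⊗ a⋆)⋆ = a ⊗ a⋆ by rewrite ms_adjM ms_adjK.
have a'a_herm : (a⋆ ⊗ a)⋆ = a⋆ ⊗ a by rewrite ms_adjM ms_adjK.
have [z [Sz z_herm aa'_inner]] :=
  srs_hermitian_inner_inverse (srs_mul Sa Sa') aa'_herm.
have [w [Sw w_herm a'a_inner]] :=
  srs_hermitian_inner_inverse (srs_mul Sa' Sa) a'a_herm.
have a_awa'a : a ≡ a ⊗ w ⊗ a⋆ ⊗ a.
  by rewrite {1}(srs_factor_adj_mul Sa Sw w_herm a'a_inner) !ms_mulA; reflexivity.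
have a_aa'za : a ≡ a ⊗ a⋆ ⊗ z ⊗ a.
  have := @srs_factor_adj_mul a⋆ z Sa' Sz z_herm; rewrite ms_adjK => /(_ aa'_inner).
  by move=> /ms_adj_meq; rewrite !ms_adjM ms_adjK z_herm !ms_mulA.
have a_right L : L ⊗ a ≡ L ⊗ a ⊗ w ⊗ a⋆ ⊗ a.
  by rewrite {1}a_awa'a !ms_mulA; reflexivity.
have a_left L : L ⊗ a ≡ L ⊗ a ⊗ a⋆ ⊗ z ⊗ a.
  by rewrite {1}a_aa'za !ms_mulA; reflexivity.
exists (a⋆ ⊗ z ⊗ a ⊗ w ⊗ a⋆).
  exact: srs_mul (srs_mul (srs_mul (srs_mul Sa' Sz) Sa) Sw) Sa'.
have ax : a ⊗ (a⋆ ⊗ z ⊗ a ⊗ w ⊗ a⋆) ≡ a ⊗ w ⊗ a⋆.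
  by rewrite !ms_mulA -a_aa'za; reflexivity.
have xa : a⋆ ⊗ z ⊗ a ⊗ w ⊗ a⋆ ⊗ a ≡ a⋆ ⊗ z ⊗ a.
  by rewrite -a_right; reflexivity.
split.
- by rewrite ax -a_awa'a; reflexivity.
- by rewrite !ms_mulA -a_right -a_left; reflexivity.
- by rewrite ax !ms_adjM ms_adjK w_herm ms_mulA; reflexivity.
- by rewrite xa !ms_adjM ms_adjK z_herm ms_mulA; reflexivity.
Qed.

End StarRegularSubring.

Lemma srs_mem_MP_inverse S a x :
  star_regular_subring om S -> S a -> is_MP_inverse a x -> S x.
Proof.
move=> S_srs Sa ax; have [y Sy ay] := srs_MP_inverse S_srs Sa.
exact: (@srs_meq S S_srs y x (MP_inverse_unique ay ax) Sy).
Qed.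

End Quotient.

Lemma star_subring_bigcap d om I (R : I -> MatSeq d -> Prop) :
  (forall i, star_subring om (R i)) ->
  star_subring om (fun a => forall i, R i a).
Proof.
move=> R_sub; repeat split; move=> *;
  match goal with |- R ?i _ => have [? [? [? [? [? [? ?]]]]]] := R_sub i end;
  eauto.
Qed.

Theorem mainTheorem3 (om : set_system nat) (hom : nonprincipal_ultrafilter om)
  (d : nat -> nat) (hd : forall n, (0 < d n)%N)
  (I : Type) (R : I -> MatSeq d -> Prop)
  (hR : forall i, star_regular_subring om (R i)) :
  star_regular_subring om (fun a => forall i, R i a).
Proof.
have om_filter : Filter om by case: hom => [? _]; exact: _.
split.
- by apply: star_subring_bigcap => i; case: (hR i).
- apply: regular_of_inner_inverse => [a b Ra Rb i | a Ra].
    by apply: (srs_mul (hR i)).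
  have full : star_regular_subring om (fun _ : MatSeq d => True).
    exact: star_regular_full.
  have [x _ ax] := srs_MP_inverse full (a := a) Logic.I.
  exists x; last by case: ax.
  by move=> i; exact: srs_mem_MP_inverse (hR i) (Ra i) ax.
- by move=> a _; exact: meq_adj_mul0.
Qed.
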